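(* Let $G$ be a complete graph on an infinite vertex set, let $v\in V(G)$, and let $M$ be a perfect matching of $G-v$. Define $w(e)=0$ if $e\in M$ and $w(e)=1$ otherwise. Then there is no perfect matching $N$ of $G$ such that every perfect matching $N'$ of $G$ with $|N\setminus N'|,|N'\setminus N|<\infty$ satisfies $w[N'\setminus N]\ge w[N\setminus N']$.
   Context: A matching is perfect if every vertex is covered by it. For a set $F$ of edges, $w[F]:=\sum_{e\in F}w(e)$. *)

(* An edge set of the complete graph on V is a relation F : V -> V -> Prop,
   read as the set of unordered pairs {x,y} (x <> y) with F x y; edge sets
   are required to be symmetric and irreflexive where relevant. *)
From Stdlib Require Import List Arith ClassicalEpsilon.
Import ListNotations.

Definition infinite_type (V : Type) : Prop :=
  ~ exists l : list V, forall x : V, In x l.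

Definition sym_irrefl {V : Type} (F : V -> V -> Prop) : Prop :=
  (forall x y, F x y -> F y x) /\ (forall x, ~ F x x).

Definition perfect_matching {V : Type} (N : V -> V -> Prop) : Prop :=
  sym_irrefl N /\ forall x, exists y, N x y /\ forall z, N x z -> z = y.

Definition perfect_matching_minus {V : Type} (v : V) (M : V -> V -> Prop) : Prop :=
  sym_irrefl M /\ (forall y, ~ M v y) /\
  forall x, x <> v -> exists y, M x y /\ forall z, M x z -> z = y.

Definition edge_diff {V : Type} (F F' : V -> V -> Prop) : V -> V -> Prop :=
  fun x y => F x y /\ ~ F' x y.

Definition enumerates {V : Type} (F : V -> V -> Prop) (l : list (V * V)) : Prop :=
  NoDup l /\
  (forall x y, In (x, y) l -> F x y) /\
  (forall x y, In (x, y) l -> ~ In (y, x) l) /\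
  (forall x y, F x y -> In (x, y) l \/ In (y, x) l).

Definition finite_edges {V : Type} (F : V -> V -> Prop) : Prop :=
  exists l, enumerates F l.

Definition wM {V : Type} (M : V -> V -> Prop) (x y : V) : nat :=
  if excluded_middle_informative (M x y) then 0 else 1.

Definition wsum {V : Type} (M : V -> V -> Prop) (l : list (V * V)) : nat :=
  fold_right (fun p acc => wM M (fst p) (snd p) + acc) 0 l.

From Stdlib Require Import List Lia ClassicalEpsilon Classical.
Import ListNotations.

(* Let u be the N-partner of v, a the M-partner of u and b the N-partner of a.
   Replacing the N-edges vu and ab by ua and bv gives a perfect matching N'
   differing from N in four edges: the two removed edges are not in M (v is
   M-unmatched, and a is M-matched to u), whereas the added edge ua is in M,
   so w[N' \ N] = 1 < 2 = w[N \ N']. *)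

Definition edge_pair {V : Type} (p q x y : V) : Prop :=
  (x = p /\ y = q) \/ (x = q /\ y = p).

Definition switch {V : Type} (N : V -> V -> Prop) (a b c d : V) : V -> V -> Prop :=
  fun x y => edge_pair b c x y \/ edge_pair d a x y \/ (N x y /\ ~ In x [a; b; c; d]).

Lemma perfect_matching_unique {V : Type} {N : V -> V -> Prop} :
  perfect_matching N -> forall x y z, N x y -> N x z -> y = z.
Proof.
  intros [_ Nex] x y z Hy Hz. destruct (Nex x) as [w [_ Hw]].
  now rewrite (Hw _ Hy), (Hw _ Hz).
Qed.

Section Switch.

Context {V : Type} {N : V -> V -> Prop} {a b c d : V}.
Hypothesis HN : perfect_matching N.
Hypotheses (Nab : N a b) (Ncd : N c d) (ac : a <> c) (ad : a <> d).

Let Nsym : forall x y, N x y -> N y x := proj1 (proj1 HN).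
Let Nirr : forall x, ~ N x x := proj2 (proj1 HN).
Let Nu := perfect_matching_unique HN.

Lemma switch_distinct : a <> b /\ b <> c /\ b <> d /\ c <> d.
Proof.
  repeat split; intros ->.
  - exact (Nirr _ Nab).
  - exact (ad (Nu _ _ _ (Nsym _ _ Nab) Ncd)).
  - exact (ac (Nu _ _ _ (Nsym _ _ Nab) (Nsym _ _ Ncd))).
  - exact (Nirr _ Ncd).
Qed.

Lemma switch_partner_in_quad x y : N x y -> In x [a; b; c; d] -> In y [a; b; c; d].
Proof.
  intros Hxy Hx; simpl in Hx |- *.
  destruct Hx as [<-|[<-|[<-|[<-|[]]]]].
  - right; left; exact (Nu _ _ _ Nab Hxy).
  - left; exact (Nu _ _ _ (Nsym _ _ Nab) Hxy).
  - right; right; right; left; exact (Nu _ _ _ Ncd Hxy).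
  - right; right; left; exact (Nu _ _ _ (Nsym _ _ Ncd) Hxy).
Qed.

Lemma switch_perfect_matching : perfect_matching (switch N a b c d).
Proof.
  destruct switch_distinct as (ab & bc & bd & cd).
  unfold switch, edge_pair.
  split; [split|].
  - intros x y [H|[H|[H Hx]]]; [tauto|tauto|].
    right; right; split; [now apply Nsym|].
    intro Hy; apply Hx, (switch_partner_in_quad y x); auto.
  - intros x [H|[H|[H _]]]; [intuition congruence|intuition congruence|exact (Nirr _ H)].
  - intro x.
    destruct (classic (In x [a; b; c; d])) as [Hx|Hx].
    + simpl in Hx; destruct Hx as [<-|[<-|[<-|[<-|[]]]]];
        [exists d|exists c|exists b|exists a];
        (split; [tauto|]); intros z [H|[H|[_ H]]]; simpl in H; intuition congruence.
    + destruct (proj2 HN x) as [y [Hy _]]; exists y; split; [tauto|].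
      intros z [H|[H|[H _]]]; [simpl in Hx; intuition congruence
                              |simpl in Hx; intuition congruence|exact (Nu _ _ _ H Hy)].
Qed.

Lemma enumerates_switch_added : enumerates (edge_diff (switch N a b c d) N) [(b, c); (d, a)].
Proof.
  destruct switch_distinct as (ab & bc & bd & cd).
  assert (nNbc : ~ N b c) by (intro H; exact (ac (Nu _ _ _ (Nsym _ _ Nab) H))).
  assert (nNda : ~ N d a) by (intro H; exact (bd (Nu _ _ _ Nab (Nsym _ _ H)))).
  unfold enumerates, edge_diff, switch, edge_pair; simpl.
  split; [|split; [|split]].
  - repeat constructor; simpl; intuition congruence.
  - intros x y [E|[E|[]]]; injection E; intros <- <-; tauto.
  - intros x y [E|[E|[]]]; injection E; intros <- <-; intuition congruence.
  - intros x y [[H|[H|[H _]]] HnN]; [intuition congruence|intuition congruence|contradiction].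
Qed.

Lemma enumerates_switch_removed : enumerates (edge_diff N (switch N a b c d)) [(a, b); (c, d)].
Proof.
  destruct switch_distinct as (ab & bc & bd & cd).
  unfold enumerates, edge_diff, switch, edge_pair; simpl.
  split; [|split; [|split]].
  - repeat constructor; simpl; intuition congruence.
  - intros x y [E|[E|[]]]; injection E; intros <- <-; intuition congruence.
  - intros x y [E|[E|[]]]; injection E; intros <- <-; intuition congruence.
  - intros x y [H Hn].
    destruct (classic (In x [a; b; c; d])) as [Hx|Hx].
    + destruct Hx as [<- | [<- | [<- | [<- | []]]]].
      * rewrite (Nu _ _ _ H Nab); tauto.
      * rewrite (Nu _ _ _ H (Nsym _ _ Nab)); tauto.
      * rewrite (Nu _ _ _ H Ncd); tauto.
      * rewrite (Nu _ _ _ H (Nsym _ _ Ncd)); tauto.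
    + exfalso; apply Hn; right; right; split; [exact H|exact Hx].
Qed.

End Switch.

Lemma wM_in {V : Type} (M : V -> V -> Prop) x y : M x y -> wM M x y = 0.
Proof. intro H; unfold wM; destruct (excluded_middle_informative (M x y)); tauto. Qed.

Lemma wM_out {V : Type} (M : V -> V -> Prop) x y : ~ M x y -> wM M x y = 1.
Proof. intro H; unfold wM; destruct (excluded_middle_informative (M x y)); tauto. Qed.

Lemma perfect_matching_minus_unique {V : Type} {v : V} {M : V -> V -> Prop} :
  perfect_matching_minus v M -> forall x y z, M x y -> M x z -> y = z.
Proof.
  intros [[_ Mirr] [Mv Mex]] x y z Hy Hz.
  destruct (classic (x = v)) as [->|xv]; [now destruct (Mv y)|].
  destruct (Mex x xv) as [w [_ Hw]]; now rewrite (Hw _ Hy), (Hw _ Hz).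
Qed.

Theorem mainTheorem8 (V : Type) (Hinf : infinite_type V) (v : V)
  (M : V -> V -> Prop) (HM : perfect_matching_minus v M) :
  ~ exists N : V -> V -> Prop,
      perfect_matching N /\
      forall N' : V -> V -> Prop,
        perfect_matching N' ->
        finite_edges (edge_diff N N') ->
        finite_edges (edge_diff N' N) ->
        forall l1 l2,
          enumerates (edge_diff N' N) l1 ->
          enumerates (edge_diff N N') l2 ->
          wsum M l2 <= wsum M l1.
Proof.
  intros [N [HN Hopt]].
  pose proof HN as [[Nsym Nirr] _].
  pose proof HM as [[Msym Mirr] [Mv Mex]].
  destruct (proj2 HN v) as [u [Nvu _]].
  assert (uv : u <> v) by (intros ->; exact (Nirr v Nvu)).
  destruct (Mex u uv) as [a [Mua _]].
  destruct (proj2 HN a) as [b [Nab _]].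
  assert (va : v <> a) by (intros <-; exact (Mv u (Msym _ _ Mua))).
  assert (vb : v <> b).
  { intros <-.
    assert (a = u) as -> by exact (perfect_matching_unique HN v a u (Nsym _ _ Nab) Nvu).
    exact (Mirr u Mua). }
  assert (nMab : ~ M a b).
  { intros Mab.
    assert (b = u) as -> by exact (perfect_matching_minus_unique HM a b u Mab (Msym _ _ Mua)).
    exact (va (perfect_matching_unique HN u v a (Nsym _ _ Nvu) (Nsym _ _ Nab))). }
  pose proof (enumerates_switch_added HN Nvu Nab va vb) as Hadded.
  pose proof (enumerates_switch_removed HN Nvu Nab va vb) as Hremoved.
  pose proof (Hopt _ (switch_perfect_matching HN Nvu Nab va vb)
                (ex_intro _ _ Hremoved) (ex_intro _ _ Hadded) _ _ Hadded Hremoved) as Hle.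
  unfold wsum in Hle; simpl in Hle.
  rewrite (wM_out M v u (Mv u)), (wM_out M a b nMab), (wM_in M u a Mua),
    (wM_out M b v (fun H => Mv b (Msym _ _ H))) in Hle.
  lia.
Qed.
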